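(* Let $\mathcal{C},\mathcal{D}$ be categories and $F:\mathcal{C}\to\mathcal{D}$ a functor. Assume that $\mathcal{D}$ is essentially small and that there exists a cardinal $\kappa$ such that $\mathcal{C}$ has products indexed by any set of cardinality $\kappa$, while $|\mathcal{D}(d',d)|\leq\kappa$ for all objects $d',d$ of $\mathcal{D}$. Then: (1) for any two parallel morphisms $f,g:c'\to c$ in $\mathcal{C}$ we have $F(f)=F(g)$; (2) if $\mathcal{C}$ is strongly connected, then $F$ is isomorphic to a constant functor.
   Context: A category is essentially small if it is equivalent to a small category. A category is strongly connected if for any two objects $c,c'$ the hom-set $\mathcal{C}(c,c')$ is non-empty. *)

Set Implicit Arguments.
Set Universe Polymorphism.
Set Polymorphic Inductive Cumulativity.

Record Category := {
  Obj :> Type;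
  Hom : Obj -> Obj -> Type;
  idm : forall a : Obj, Hom a a;
  comp : forall a b c : Obj, Hom b c -> Hom a b -> Hom a c;
  comp_id_l : forall a b (f : Hom a b), comp (idm b) f = f;
  comp_id_r : forall a b (f : Hom a b), comp f (idm a) = f;
  comp_assoc : forall a b c d (f : Hom a b) (g : Hom b c) (h : Hom c d),
      comp h (comp g f) = comp (comp h g) f
}.

Arguments Hom {_} _ _.
Arguments idm {_} _.
Arguments comp {_ _ _ _} _ _.

Record Functor (C D : Category) := {
  fobj :> C -> D;
  fmap : forall a b : C, Hom a b -> Hom (fobj a) (fobj b);
  fmap_id : forall a : C, fmap a a (idm a) = idm (fobj a);
  fmap_comp : forall a b c (f : Hom a b) (g : Hom b c),
      fmap a c (comp g f) = comp (fmap b c g) (fmap a b f)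
}.

Arguments fmap {_ _} _ {_ _} _.

Definition is_iso {C : Category} {a b : C} (f : Hom a b) : Prop :=
  exists g : Hom b a, comp g f = idm a /\ comp f g = idm b.

Definition nat_iso (C D : Category) (F G : Functor C D) : Prop :=
  exists eta : forall c : C, Hom (F c) (G c),
    (forall c, is_iso (eta c)) /\
    (forall (a b : C) (f : Hom a b), comp (eta b) (fmap F f) = comp (fmap G f) (eta a)).

Definition id_functor (C : Category) : Functor C C.
Proof.
  refine {| fobj := fun c => c; fmap := fun a b f => f |}.
  - reflexivity.
  - reflexivity.
Defined.

Definition comp_functor (C D E : Category) (G : Functor D E) (F : Functor C D)
  : Functor C E.
Proof.
  refine {| fobj := fun c => G (F c); fmap := fun a b f => fmap G (fmap F f) |}.
  - intros a. rewrite fmap_id. apply fmap_id.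
  - intros a b c f g. rewrite fmap_comp. apply fmap_comp.
Defined.

Definition const_functor (C D : Category) (d : D) : Functor C D.
Proof.
  refine {| fobj := fun _ => d; fmap := fun _ _ _ => idm d |}.
  - reflexivity.
  - intros. symmetry. apply comp_id_l.
Defined.

Definition equivalent (C D : Category) : Prop :=
  exists (F : Functor C D) (G : Functor D C),
    nat_iso (comp_functor G F) (id_functor C) /\
    nat_iso (comp_functor F G) (id_functor D).

(* a small category: its objects and all hom-sets are sets (live in Set) *)
Definition SmallCategory := Category@{Set Set}.

Definition essentially_small (D : Category) : Prop :=
  exists S : SmallCategory, equivalent S D.

Definition strongly_connected (C : Category) : Prop :=
  forall c c' : C, inhabited (Hom c c').

Definition is_product {C : Category} {I : Type} {X : I -> C} {p : C}
    (pr : forall i, Hom p (X i)) : Prop :=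
  forall (q : C) (h : forall i, Hom q (X i)),
    exists u : Hom q p,
      (forall i, comp (pr i) u = h i) /\
      (forall u' : Hom q p, (forall i, comp (pr i) u' = h i) -> u' = u).

Definition has_products (C : Category) (I : Type) : Prop :=
  forall X : I -> C, exists (p : C) (pr : forall i, Hom p (X i)), is_product pr.

Definition card_le (A K : Type) : Prop :=
  exists i : A -> K, forall x y, i x = i y -> x = y.

(* If F f <> F g for some parallel f, g : c' -> c, then tupling the K-indexed
   families of f's and g's into the power c^K and applying F embeds the
   K-indexed subsets into Hom(F c', F (c^K)), which has cardinality at most
   |K|; this contradicts Cantor's theorem.  Once F identifies parallel
   morphisms, strong connectedness makes every F h : F c -> F c0 an
   isomorphism, natural in c, onto the constant functor at F c0. *)
From Stdlib Require Import ClassicalEpsilon FunctionalExtensionality.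

Set Implicit Arguments.

Lemma card_le_trans (A B K : Type) : card_le A B -> card_le B K -> card_le A K.
Proof.
  intros [i Hi] [j Hj].
  exists (fun x => j (i x)).
  intros x y Hxy; apply Hi, Hj, Hxy.
Qed.

Lemma cantor_not_card_le (K : Type) : ~ card_le (K -> bool) K.
Proof.
  intros [i Hinj].
  set (P k := exists s, i s = k /\ s k = false).
  set (s0 k := if excluded_middle_informative (P k) then true else false).
  assert (Hs0 : forall k, s0 k = true <-> P k).
  { intros k. unfold s0.
    destruct (excluded_middle_informative (P k)); split; congruence || tauto. }
  destruct (s0 (i s0)) eqn:E.
  - destruct (proj1 (Hs0 _) E) as [s [Hs Hsk]].
    apply Hinj in Hs. subst s. congruence.
  - assert (s0 (i s0) = true) by (apply Hs0; exists s0; split; [reflexivity | exact E]).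
    congruence.
Qed.

Section PowerObject.

Variables (C D : Category) (F : Functor C D) (K : Type).
Variables (c' c P : C).
Variable pr : K -> Hom P c.
Hypothesis pr_product : @is_product C K (fun _ => c) P pr.

Lemma power_tuple (h : K -> Hom c' c) :
  {u : Hom c' P | forall i, comp (pr i) u = h i}.
Proof.
  apply constructive_indefinite_description.
  destruct (pr_product c' h) as [u [Hu _]].
  exists u. exact Hu.
Qed.

Lemma card_le_predicates_fmap_power (f g : Hom c' c) :
  fmap F f <> fmap F g -> card_le (K -> bool) (Hom (F c') (F P)).
Proof.
  intros Hfg.
  set (tuple s := proj1_sig (power_tuple (fun i => if s i : bool then f else g))).
  exists (fun s => fmap F (tuple s)).
  intros s t Hst. apply functional_extensionality. intros i.
  assert (Hi : fmap F (if s i then f else g) = fmap F (if t i then f else g)).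
  { unfold tuple in Hst.
    destruct (power_tuple (fun i => if s i then f else g)) as [us Hus].
    destruct (power_tuple (fun i => if t i then f else g)) as [ut Hut].
    simpl in Hst.
    rewrite <- Hus, <- Hut, !fmap_comp, Hst. reflexivity. }
  destruct (s i), (t i); try reflexivity; exfalso; apply Hfg; congruence.
Qed.

End PowerObject.

Lemma fmap_parallel_eq (C D : Category) (F : Functor C D) (K : Type) :
  has_products C K -> (forall d' d : D, card_le (Hom d' d) K) ->
  forall (c' c : C) (f g : Hom c' c), fmap F f = fmap F g.
Proof.
  intros Hprod Hhom c' c f g.
  destruct (excluded_middle_informative (fmap F f = fmap F g)) as [Hfg | Hfg];
    [exact Hfg | exfalso].
  destruct (Hprod (fun _ => c)) as [P [pr Hpr]].
  apply (@cantor_not_card_le K), (@card_le_trans _ (Hom (F c') (F P))).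
  - eapply card_le_predicates_fmap_power; eassumption.
  - apply Hhom.
Qed.

Section ParallelIdentifyingFunctor.

Variables (C D : Category) (F : Functor C D).
Hypothesis fmap_parallel : forall (c' c : C) (f g : Hom c' c), fmap F f = fmap F g.

Lemma fmap_is_iso (a b : C) (h : Hom a b) : inhabited (Hom b a) -> is_iso (fmap F h).
Proof.
  intros [k]. exists (fmap F k).
  split; rewrite <- fmap_comp, <- fmap_id; apply fmap_parallel.
Qed.

Lemma nat_iso_const_of_strongly_connected (c0 : C) :
  strongly_connected C -> nat_iso F (const_functor C D (F c0)).
Proof.
  intros Hsc.
  exists (fun c => fmap F (epsilon (Hsc c c0) (fun _ => True))).
  split.
  - intros c. apply fmap_is_iso, Hsc.
  - intros a b f. simpl. rewrite comp_id_l, <- fmap_comp. apply fmap_parallel.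
Qed.

End ParallelIdentifyingFunctor.

Theorem theorem2p3 (C D : Category) (F : Functor C D) (K : Type)
  (HDsmall : essentially_small D)
  (Hprod : has_products C K)
  (Hhom : forall d' d : D, card_le (Hom d' d) K) :
  (forall (c' c : C) (f g : Hom c' c), fmap F f = fmap F g) /\
  (strongly_connected C -> inhabited (Obj C) ->
     exists d : D, nat_iso F (const_functor C D d)).
Proof.
  pose proof (fmap_parallel_eq F Hprod Hhom) as Hparallel.
  split; [exact Hparallel |].
  intros Hsc [c0].
  exists (F c0).
  exact (nat_iso_const_of_strongly_connected F Hparallel c0 Hsc).
Qed.
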